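(* Let $\partial$ be a derivation of $\mathcal{H}_N'$ of degree $\bm 0$, i.e. $\partial(\mathbb{K}h_{\bm r})\subseteq\mathbb{K}h_{\bm r}$ for all $\bm r\in\mathbb{Z}^N$. Then there exist $c_1,\dots,c_N\in\mathbb{K}$ such that, with $h=\sum_{k=1}^N c_kD(e_k,\bm0)\in\mathfrak h$, we have $\partial=\operatorname{ad}(h)$ on $\mathcal{H}_N'$.
   Context: $\mathbb{K}$ is an algebraically closed field of characteristic zero, $N=2m\ge2$ even, $e_1,\dots,e_N$ standard basis, $(\cdot,\cdot)$ the bilinear form on $\mathbb{K}^N$ with $(e_i,e_j)=\delta_{ij}$. Let $A_N=\mathbb{K}[t_1^{\pm1},\dots,t_N^{\pm1}]$, $d_i=t_i\frac{\partial}{\partial t_i}$, $t^{\bm r}=t_1^{r_1}\cdots t_N^{r_N}$, $D(u,\bm r)=\sum_i u_it^{\bm r}d_i$ (so $D(e_k,\bm0)=d_k$). Let $\bm J=\begin{pmatrix} O_m & I_m\\ -I_m & O_m\end{pmatrix}$, $\overline{\bm r}=\bm J\bm r$, $h_{\bm r}=D(\overline{\bm r},\bm r)$, $\mathfrak h=\operatorname{span}_{\mathbb{K}}\{d_1,\dots,d_N\}$. The Hamiltonian Lie algebra $\mathcal{H}_N=\operatorname{span}_{\mathbb{K}}\{h_{\bm r}:\bm r\ne\bm0\}\oplus\mathfrak h$ has commutator bracket with $[h_{\bm r},h_{\bm s}]=(\overline{\bm r},\bm s)h_{\bm r+\bm s}$, $[D(u,\bm0),h_{\bm r}]=(u,\bm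 r)h_{\bm r}$; $\mathcal{H}_N'=\operatorname{span}_{\mathbb{K}}\{h_{\bm r}:\bm r\ne\bm0\}$ is an ideal, and $\operatorname{ad}(h)$ denotes the map $x\mapsto[h,x]$ restricted to $\mathcal{H}_N'$. *)

From HB Require Import structures.
From mathcomp Require Import all_boot all_order all_algebra.
From mathcomp Require Import finmap monalg.
Set Implicit Arguments. Unset Strict Implicit. Unset Printing Implicit Defensive.
Import Order.TTheory GRing.Theory Num.Theory.
Local Open Scope ring_scope.

Notation ZN m := 'cV[int]_(m + m).

Definition Jmat (m : nat) : 'M[int]_(m + m) :=
  block_mx 0 1%:M (- 1%:M) 0.

Definition rbar (m : nat) (r : ZN m) : ZN m := Jmat m *m r.

Definition bform (m : nat) (u v : ZN m) : int := \sum_(i < m + m) u i 0 * v i 0.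

(* The vector space spanned by the h_r : finitely supported K-valued functions
   on Z^N; the basis vector h_r is <<r>> (coefficient 1 at r). H_N' is the
   subspace of those x with x@_0 = 0 (h_0 = D(0,0) = 0 in the paper). *)
Notation Hsp F m := {malg F[ZN m]}.

Definition inHp (F : fieldType) (m : nat) (x : Hsp F m) : Prop := x@_0 = 0.

Definition hb (F : fieldType) (m : nat) (r : ZN m) : Hsp F m := << r >>.

Definition hbr (F : fieldType) (m : nat) (x y : Hsp F m) : Hsp F m :=
  \sum_(r <- msupp x) \sum_(s <- msupp y)
     (x@_r * y@_s * (bform (rbar r) s)%:~R) *: hb F (r + s).

Definition pair_KZ (F : fieldType) (m : nat) (u : 'I_(m + m) -> F) (r : ZN m) : F :=
  \sum_(i < m + m) u i * (r i 0)%:~R.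

(* ad(D(u,0)) restricted to H_N', the linear extension of
   [D(u,0), h_r] = (u, r) h_r. *)
Definition adD (F : fieldType) (m : nat) (u : 'I_(m + m) -> F) (x : Hsp F m) : Hsp F m :=
  \sum_(r <- msupp x) (x@_r * pair_KZ u r) *: hb F r.

Definition is_derivation (F : fieldType) (m : nat) (D : Hsp F m -> Hsp F m) : Prop :=
  [/\ (forall x, inHp x -> inHp (D x)),
      (forall (a : F) x y, inHp x -> inHp y -> D (a *: x + y) = a *: D x + D y)
    & (forall x y, inHp x -> inHp y -> D (hbr x y) = hbr (D x) y + hbr x (D y))].

Definition degree0 (F : fieldType) (m : nat) (D : Hsp F m -> Hsp F m) : Prop :=
  forall r : ZN m, r != 0 -> exists a : F, D (hb F r) = a *: hb F r.

From HB Require Import structures.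
From mathcomp Require Import all_boot all_order all_algebra.
From mathcomp Require Import finmap monalg zify.
(* A degree-0 derivation acts diagonally, D h_r = b(r) h_r.  Applying D to
   [h_r, h_s] = w(r,s) h_(r+s), where w(r,s) = (J r, s), shows in characteristic
   0 that b(r+s) = b(r) + b(s) whenever w(r,s) <> 0.  Since w is nondegenerate,
   for nonzero r, s, r+s there is a t with w(r,t), w(s,t), w(r+s,t) all nonzero
   (avoid finitely many hyperplanes), and comparing the two ways of expanding
   b(r+s+t) gives additivity for every pair.  An additive b on Z^N is
   b(r) = sum_i r_i b(e_i), so D = ad(sum_i b(e_i) d_i). *)

Set Implicit Arguments. Unset Strict Implicit. Unset Printing Implicit Defensive.
Import GRing.Theory Num.Theory.
Local Open Scope ring_scope.

Lemma exists_int_affine_neq0 (s : seq (int * int)) :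
  all (fun p => (p.1 != 0) || (p.2 != 0)) s ->
  exists k : int, all (fun p => p.1 + k * p.2 != 0) s.
Proof.
suff large_k : all (fun p => (p.1 != 0) || (p.2 != 0)) s ->
    exists N : int, forall k, N <= k -> all (fun p => p.1 + k * p.2 != 0) s.
  by move=> /large_k [N hN]; exists N; apply: hN.
elim: s => [|[a b] s IH] /=; first by exists 0.
case/andP=> hab /IH [N hN]; exists (`|N| + `|a| + 1) => k hk.
rewrite hN ?andbT; last by lia.
have [b0|nb] := eqVneq b 0; first by move: hab; rewrite b0; lia.
nia.
Qed.

Section SymplecticForm.
Variable m : nat.
Implicit Types u v w : ZN m.

Definition symp u v : int := bform (rbar u) v.

Lemma bformE u v : bform u v = (u^T *m v) 0 0.
Proof. by rewrite /bform mxE; apply: eq_bigr => i _; rewrite mxE. Qed.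

Lemma tr_Jmat : (Jmat m)^T = - Jmat m.
Proof.
by rewrite /Jmat tr_block_mx !trmx0 trmx1 linearN /= trmx1 opp_block_mx !oppr0 opprK.
Qed.

Lemma trJmat_mulJ : (Jmat m)^T *m Jmat m = 1%:M.
Proof.
rewrite tr_Jmat /Jmat opp_block_mx mulmx_block !oppr0 !mulmx0 !mul0mx !addr0 !add0r.
by rewrite mulNmx mulmxN opprK !mul1mx opprK scalar_mx_block mulmx1.
Qed.

Lemma rbar_eq0 u : (rbar u == 0) = (u == 0).
Proof.
apply/eqP/eqP => [Ju0|->]; last by rewrite /rbar mulmx0.
by rewrite -[u]mul1mx -trJmat_mulJ -mulmxA -/(rbar u) Ju0 mulmx0.
Qed.

Lemma sympE u v : symp u v = (u^T *m (Jmat m)^T *m v) 0 0.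
Proof. by rewrite /symp bformE /rbar trmx_mul. Qed.

Lemma symp_alt u : symp u u = 0.
Proof.
set M := u^T *m (Jmat m)^T *m u.
have trM : M^T = - M.
  by rewrite /M !trmx_mul !trmxK mulmxA tr_Jmat mulmxN mulNmx opprK.
have := congr1 (fun A : 'M_1 => A 0 0) trM; rewrite /= sympE -/M mxE [RHS]mxE.
by move: (M 0 0) => x; lia.
Qed.

Lemma sympDr u v w : symp u (v + w) = symp u v + symp u w.
Proof. by rewrite !sympE mulmxDr mxE. Qed.

Lemma sympNl u w : symp (- u) w = - symp u w.
Proof. by rewrite !sympE linearN /= !mulNmx mxE. Qed.

Lemma sympZr k u w : symp u (k *: w) = k * symp u w.
Proof. by rewrite !sympE -scalemxAr mxE. Qed.

Lemma symp0l w : symp 0 w = 0.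
Proof. by rewrite sympE trmx0 !mul0mx mxE. Qed.

Lemma symp0r u : symp u 0 = 0.
Proof. by rewrite sympE mulmx0 mxE. Qed.

Lemma symp_rbar_eq0 u : (symp u (rbar u) == 0) = (u == 0).
Proof.
rewrite -rbar_eq0 /symp /bform psumr_eq0 => [|i _]; last exact: sqr_ge0.
apply/allP/eqP => [Ju0|-> i _]; last by rewrite mxE mulr0.
apply/matrixP => i j; rewrite ord1 [RHS]mxE.
by move: (Ju0 i (mem_index_enum i)); rewrite mulf_eq0 orbb => /eqP.
Qed.

Lemma exists_symp_neq0 (l : seq (ZN m)) :
  0 \notin l -> exists t, all (fun u => symp u t != 0) l.
Proof.
elim: l => [|u l IH]; first by exists 0.
rewrite inE negb_or eq_sym => /andP[nu /IH [t ht]].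
have [|k hk] := @exists_int_affine_neq0 [seq (symp v t, symp v (rbar u)) | v <- u :: l].
  rewrite /= symp_rbar_eq0 nu orbT /= all_map.
  by apply/allP => v vl /=; rewrite (allP ht v vl).
exists (t + k *: rbar u); move: hk; rewrite all_map; apply: sub_all => v /=.
by rewrite sympDr sympZr mulrC.
Qed.

Lemma symp_nonorth_additive (G : zmodType) (b : ZN m -> G) :
    b 0 = 0 -> (forall u v, symp u v != 0 -> b (u + v) = b u + b v) ->
  {morph b : u v / u + v}.
Proof.
move=> b0 bD.
have bN u : b (- u) = - b u.
  have [->|nu] := eqVneq u 0; first by rewrite oppr0 b0 oppr0.
  have hu : symp u (rbar u) != 0 by rewrite symp_rbar_eq0.
  have hNu : symp (- u) (u + rbar u) != 0.
    by rewrite sympNl sympDr symp_alt add0r oppr_eq0.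
  have := bD _ _ hNu; rewrite addKr (bD _ _ hu) addrA -[X in X = _]add0r.
  by move=> /addIr /esym /eqP; rewrite addr_eq0 => /eqP.
move=> u v.
have [->|nu] := eqVneq u 0; first by rewrite b0 !add0r.
have [->|nv] := eqVneq v 0; first by rewrite b0 !addr0.
have [uv0|nuv] := eqVneq (u + v) 0.
  have -> : v = - u by rewrite -(addKr u v) uv0 addr0.
  by rewrite subrr b0 bN subrr.
have [orth|] := eqVneq (symp u v) 0; last exact: bD.
have [t] : exists t, all (fun w => symp w t != 0) [:: u; v; u + v].
  by apply: exists_symp_neq0; rewrite !inE !negb_or ![0 == _]eq_sym nu nv nuv.
rewrite /= andbT => /and3P[ut vt uvt].
have uvt' : symp u (v + t) != 0 by rewrite sympDr orth add0r.
apply: (addIr (b t)).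
by rewrite -(bD _ _ uvt) -addrA (bD _ _ uvt') (bD _ _ vt) addrA.
Qed.

End SymplecticForm.

Lemma additive_intvec_sum n (R : pzRingType) (b : 'cV[int]_n -> R) :
  {morph b : u v / u + v} -> forall r, b r = \sum_i b (delta_mx i 0) * (r i 0)%:~R.
Proof.
move=> bD.
have b0 : b 0 = 0 by apply: (addIr (b 0)); rewrite -bD !add0r.
pose bA : {additive 'cV[int]_n -> R} := HB.pack b (GRing.isNmodMorphism.Build _ _ b (conj b0 bD)).
have bMz v k : b (v *~ k) = b v *~ k := raddfMz bA k v.
move=> r; rewrite {1}[r]matrix_sum_delta (big_morph b bD b0).
by apply: eq_bigr => i _; rewrite big_ord1 -[X in X *: _]intz scaler_int bMz mulrzr.
Qed.

Section HamiltonianBracket.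
Variables (F : fieldType) (m : nat).
Implicit Types (a c : F) (r s : ZN m).

Lemma msupp_scale_hb a r : msupp (a *: hb F r) = if a == 0 then fset0 else [fset r]%fset.
Proof. by rewrite msuppZ /hb msuppU (negbTE (oner_neq0 F)). Qed.

Lemma hbrZZ a c r s :
  hbr (a *: hb F r) (c *: hb F s) = (a * c * (symp r s)%:~R) *: hb F (r + s).
Proof.
(* Generalizing the two operands keeps later rewrites from unifying against
   [hb F _], whose unfolding into finite-map internals is very slow. *)
rewrite /hbr.
move: (a *: hb F r) (c *: hb F s) (mcoeffZ a (hb F r) r) (mcoeffZ c (hb F s) s)
  (msupp_scale_hb a r) (msupp_scale_hb c s).
rewrite /hb !mcoeffUU !mulr1 => x y xr ys -> ->.
have [->|_] := eqVneq a 0; first by rewrite big_seq_fset0 !mul0r scale0r.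
have [->|_] := eqVneq c 0.
  by rewrite big_seq_fset1 big_seq_fset0 mulr0 mul0r scale0r.
by rewrite !big_seq_fset1 xr ys.
Qed.

Lemma hbr_hb r s : hbr (hb F r) (hb F s) = (symp r s)%:~R *: hb F (r + s).
Proof. by rewrite -[hb F r]scale1r -[hb F s]scale1r hbrZZ !mul1r. Qed.

Lemma hbrZl a r s : hbr (a *: hb F r) (hb F s) = (a * (symp r s)%:~R) *: hb F (r + s).
Proof. by rewrite -[hb F s]scale1r hbrZZ mulr1. Qed.

Lemma hbrZr c r s : hbr (hb F r) (c *: hb F s) = (c * (symp r s)%:~R) *: hb F (r + s).
Proof. by rewrite -[hb F r]scale1r hbrZZ mul1r. Qed.

Lemma scale_hb_inj r : injective (fun a => a *: hb F r).
Proof.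
move=> a c /(congr1 (mcoeff r)).
by rewrite [LHS]mcoeffZ [RHS]mcoeffZ /hb mcoeffUU !mulr1.
Qed.

Lemma inHp0 : @inHp F m 0.
Proof. exact: mcoeff0. Qed.

Lemma hb_inHp r : r != 0 -> inHp (hb F r).
Proof. by move=> nr; rewrite /inHp /hb mcoeffU (negbTE nr). Qed.

Lemma inHp_notin_msupp (x : Hsp F m) : inHp x -> 0 \notin msupp x.
Proof. by move=> x0; rewrite -mcoeff_neq0 negbK; apply/eqP. Qed.

Lemma inHp_sum_hb (l : seq (ZN m)) (f : ZN m -> F) :
  0 \notin l -> inHp (\sum_(r <- l) f r *: hb F r).
Proof.
move=> l0; rewrite /inHp raddf_sum big_seq big1 // => r rl /=.
by rewrite mcoeffZ hb_inHp ?mulr0 //; apply: contraNneq l0 => <-.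
Qed.

Lemma monalg_hbE (x : Hsp F m) : x = \sum_(r <- msupp x) x@_r *: hb F r.
Proof.
rewrite {1}[x]monalgE; apply: eq_bigr => r _; apply/malgP => k.
by rewrite [LHS]mcoeffU [RHS]mcoeffZ [X in _ * X]mcoeffU mulr_natr.
Qed.

End HamiltonianBracket.

Arguments inHp0 {F m}.
Arguments hb_inHp {F m r}.

Lemma pchar0_intr_eq0 (F : fieldType) (k : int) :
  [pchar F] =i pred0 -> (k%:~R == 0 :> F) = (k == 0).
Proof. by move=> /pcharf0P charF; case: k => n; rewrite /intmul ?oppr_eq0 charF. Qed.

Section DegreeZeroDerivation.
Variables (F : fieldType) (m : nat) (D : Hsp F m -> Hsp F m).
Hypotheses (derD : is_derivation D) (deg0D : degree0 D).
Implicit Types (a : F) (r s : ZN m) (x : Hsp F m).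

Lemma derivation0 : D 0 = 0.
Proof.
have [_ Dlin _] := derD; have := Dlin 1 0 0 inHp0 inHp0.
by rewrite scaler0 addr0 scale1r -[X in X = _]addr0 => /addrI.
Qed.

Lemma derivationZ a x : inHp x -> D (a *: x) = a *: D x.
Proof.
have [_ Dlin _] := derD => x0.
by rewrite -[a *: x]addr0 (Dlin _ _ _ x0 inHp0) derivation0 addr0.
Qed.

Lemma derivation_sum_hb (l : seq (ZN m)) (f : ZN m -> F) : 0 \notin l ->
  D (\sum_(r <- l) f r *: hb F r) = \sum_(r <- l) f r *: D (hb F r).
Proof.
have [_ Dlin _] := derD.
elim: l => [|r l IH]; first by rewrite [in LHS]big_nil [RHS]big_nil derivation0.
rewrite inE negb_or eq_sym => /andP[nr l0].
rewrite [in LHS]big_cons [RHS]big_cons Dlin ?IH //.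
- exact: hb_inHp.
- exact: inHp_sum_hb.
Qed.

Lemma derivation_expand x : inHp x -> D x = \sum_(r <- msupp x) x@_r *: D (hb F r).
Proof.
by move=> x0; rewrite -derivation_sum_hb ?inHp_notin_msupp // -monalg_hbE.
Qed.

Definition eigval r : F := if r == 0 then 0 else (D (hb F r))@_r.

Lemma derivation_hb r : r != 0 -> D (hb F r) = eigval r *: hb F r.
Proof.
move=> nr; rewrite /eigval (negbTE nr); have [a ->] := deg0D nr.
by rewrite [in RHS]mcoeffZ /hb mcoeffUU mulr1.
Qed.

Hypothesis charF : [pchar F] =i pred0.

Lemma eigvalD_nonorth r s : symp r s != 0 -> eigval (r + s) = eigval r + eigval s.
Proof.
move=> rs; have [_ _ Dlie] := derD.
have nr : r != 0 by apply: contraNneq rs => ->; rewrite symp0l.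
have ns : s != 0 by apply: contraNneq rs => ->; rewrite symp0r.
have nrs : r + s != 0.
  apply: contraNneq rs => rs0.
  by rewrite -[symp r s]add0r -{1}(symp_alt r) -sympDr rs0 symp0r.
have := Dlie _ _ (hb_inHp nr) (hb_inHp ns).
rewrite (derivation_hb nr) (derivation_hb ns) hbrZl hbrZr hbr_hb.
rewrite (derivationZ _ (hb_inHp nrs)) (derivation_hb nrs) scalerA -scalerDl.
move/scale_hb_inj; rewrite mulrC -mulrDl; apply: mulIf.
by rewrite pchar0_intr_eq0.
Qed.

Lemma eigvalD : {morph eigval : r s / r + s}.
Proof. by apply: symp_nonorth_additive eigvalD_nonorth; rewrite /eigval eqxx. Qed.

Lemma eigval_linear r : eigval r = pair_KZ (fun i => eigval (delta_mx i 0)) r.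
Proof. exact: additive_intvec_sum eigvalD r. Qed.

End DegreeZeroDerivation.

Theorem lemma4p4 (F : closedFieldType) (m : nat)
  (charF : [pchar F] =i pred0) (hm : (0 < m)%N)
  (D : Hsp F m -> Hsp F m) :
  is_derivation D -> degree0 D ->
  exists c : 'I_(m + m) -> F,
    forall x : Hsp F m, inHp x -> D x = adD c x.
Proof.
move=> derD deg0D; exists (fun i => eigval D (delta_mx i 0)) => x x0.
rewrite (derivation_expand derD x0) /adD; apply: eq_big_seq => r rx.
have nr : r != 0 by apply: contraNneq (inHp_notin_msupp x0) => <-.
by rewrite (derivation_hb deg0D nr) scalerA (eigval_linear derD deg0D charF).
Qed.
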